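(* Let ${\mathbf{X}}\in\mathbb{R}_+^{m\times n}$, ${\mathbf{A}}_1\in\mathbb{R}^{k\times m}$, ${\mathbf{A}}_2\in\mathbb{R}^{n\times k}$ with ${\mathbf{A}}_1{\mathbf{X}}{\mathbf{A}}_2$ invertible. Let ${\mathbf{Q}}_1$ be a matrix whose columns form an orthonormal basis of the column space of ${\mathbf{X}}{\mathbf{A}}_2$, and ${\mathbf{Q}}_2$ a matrix whose columns form an orthonormal basis of the row space of ${\mathbf{A}}_1{\mathbf{X}}$. Let $\lambda_1,\lambda_2\ge0$ and let $\sigma_1,\sigma_2$ satisfy $$\sigma_1\ge\max_{a,b}\big(({\mathbf{A}}_1^T{\mathbf{A}}_1)_{ab}\big)_-,\quad \sigma_1\ge\max_{a,b}\big(({\mathbf{A}}_1^T{\mathbf{A}}_1+\lambda_1({\mathbf{I}}-{\mathbf{Q}}_1{\mathbf{Q}}_1^T))_{ab}\big)_-,$$ $$\sigma_2\ge\max_{a,b}\big(({\mathbf{A}}_2{\mathbf{A}}_2^T)_{ab}\big)_-,\quad \sigma_2\ge\max_{a,b}\big(({\mathbf{A}}_2{\mathbf{A}}_2^T+\lambda_2({\mathbf{I}}-{\mathbf{Q}}_2{\mathbf{Q}}_2^T))_{ab}\big)_-.$$ Set ${\mathbf{A}}_{1,\sigma}={\mathbf{A}}_1^T{\mathbf{A}}_1+\sigma_1\mathbf{1}_m\mathbf{1}_m^T$ and ${\mathbf{A}}_{2,\sigma}={\mathbf{A}}_2{\mathbf{A}}_2^T+\sigma_2\mathbf{1}_n\mathbf{1}_n^T$.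 Then, for entrywise nonnegative ${\mathbf{U}}\in\mathbb{R}^{m\times r}$, ${\mathbf{V}}\in\mathbb{R}^{n\times r}$ (with the denominators below entrywise positive), the objective $$\|{\mathbf{A}}_1({\mathbf{X}}-{\mathbf{U}}{\mathbf{V}}^T)\|_F^2+\|({\mathbf{X}}-{\mathbf{U}}{\mathbf{V}}^T){\mathbf{A}}_2\|_F^2+\lambda_1\|({\mathbf{I}}-{\mathbf{Q}}_1{\mathbf{Q}}_1^T){\mathbf{U}}{\mathbf{V}}^T\|_F^2+\lambda_2\|{\mathbf{U}}{\mathbf{V}}^T({\mathbf{I}}-{\mathbf{Q}}_2{\mathbf{Q}}_2^T)\|_F^2+\sigma_1\|\mathbf{1}_m^T({\mathbf{X}}-{\mathbf{U}}{\mathbf{V}}^T)\|_2^2+\sigma_2\|({\mathbf{X}}-{\mathbf{U}}{\mathbf{V}}^T)\mathbf{1}_n\|_2^2$$ does not increase under each of the updates $${\mathbf{U}}\leftarrow{\mathbf{U}}\circ\frac{{\mathbf{A}}_{1,\sigma}{\mathbf{X}}{\mathbf{V}}+{\mathbf{X}}{\mathbf{A}}_{2,\sigma}{\mathbf{V}}}{({\mathbf{A}}_{1,\sigma}+\lambda_1({\mathbf{I}}-{\mathbf{Q}}_1{\mathbf{Q}}_1^T)){\mathbf{U}}{\mathbf{V}}^T{\mathbf{V}}+{\mathbf{U}}{\mathbf{V}}^T({\mathbf{A}}_{2,\sigma}+\lambda_2({\mathbf{I}}-{\mathbf{Q}}_2{\mathbf{Q}}_2^T)){\mathbf{V}}},$$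 $${\mathbf{V}}\leftarrow{\mathbf{V}}\circ\frac{{\mathbf{X}}^T{\mathbf{A}}_{1,\sigma}{\mathbf{U}}+{\mathbf{A}}_{2,\sigma}{\mathbf{X}}^T{\mathbf{U}}}{{\mathbf{V}}{\mathbf{U}}^T({\mathbf{A}}_{1,\sigma}+\lambda_1({\mathbf{I}}-{\mathbf{Q}}_1{\mathbf{Q}}_1^T)){\mathbf{U}}+({\mathbf{A}}_{2,\sigma}+\lambda_2({\mathbf{I}}-{\mathbf{Q}}_2{\mathbf{Q}}_2^T)){\mathbf{V}}{\mathbf{U}}^T{\mathbf{U}}},$$ and the updated factors remain entrywise nonnegative.
   Context: $\mathbb{R}_+^{m\times n}$ denotes entrywise nonnegative $m\times n$ matrices; $(x)_-=-\min(x,0)$; $\mathbf{1}_m$ is the all-ones vector in $\mathbb{R}^m$; $\circ$ is entrywise product and the fraction bar is entrywise division. $\|\cdot\|_F$ is the Frobenius norm, $\|\cdot\|_2$ the Euclidean norm. *)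

From HB Require Import structures.
From mathcomp Require Import all_boot all_order all_algebra.
Set Implicit Arguments. Unset Strict Implicit. Unset Printing Implicit Defensive.
Import Order.TTheory GRing.Theory Num.Theory.
Local Open Scope ring_scope.

Section Defs.
Variable R : realFieldType.

Definition frob2 (p q : nat) (M : 'M[R]_(p, q)) : R :=
  \sum_(i < p) \sum_(j < q) M i j ^+ 2.

Definition negpart (x : R) : R := - Num.min x 0.

Definition ones (p q : nat) : 'M[R]_(p, q) := const_mx 1.

Definition nonneg_mx (p q : nat) (M : 'M[R]_(p, q)) : Prop :=
  forall i j, 0 <= M i j.

Definition pos_mx (p q : nat) (M : 'M[R]_(p, q)) : Prop :=
  forall i j, 0 < M i j.

Definition hadamard (p q : nat) (M N : 'M[R]_(p, q)) : 'M[R]_(p, q) :=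
  \matrix_(i, j) (M i j * N i j).
Definition ediv (p q : nat) (M N : 'M[R]_(p, q)) : 'M[R]_(p, q) :=
  \matrix_(i, j) (M i j / N i j).

Definition onb_colspace (p q s : nat) (Q : 'M[R]_(p, s)) (M : 'M[R]_(p, q)) : Prop :=
  Q^T *m Q = 1%:M /\ (Q^T == M^T)%MS.

Definition onb_rowspace (p q s : nat) (Q : 'M[R]_(q, s)) (M : 'M[R]_(p, q)) : Prop :=
  Q^T *m Q = 1%:M /\ (Q^T == M)%MS.

Variables (m n k r p1 p2 : nat).
Variables (X : 'M[R]_(m, n)) (A1 : 'M[R]_(k, m)) (A2 : 'M[R]_(n, k)).
Variables (Q1 : 'M[R]_(m, p1)) (Q2 : 'M[R]_(n, p2)).
Variables (lam1 lam2 sig1 sig2 : R).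

Definition P1 : 'M[R]_m := 1%:M - Q1 *m Q1^T.
Definition P2 : 'M[R]_n := 1%:M - Q2 *m Q2^T.
Definition A1sig : 'M[R]_m := A1^T *m A1 + sig1 *: ones m m.
Definition A2sig : 'M[R]_n := A2 *m A2^T + sig2 *: ones n n.

Definition objective (U : 'M[R]_(m, r)) (V : 'M[R]_(n, r)) : R :=
  let E := X - U *m V^T in
  frob2 (A1 *m E) + frob2 (E *m A2)
  + lam1 * frob2 (P1 *m (U *m V^T)) + lam2 * frob2 (U *m V^T *m P2)
  + sig1 * frob2 (ones 1 m *m E) + sig2 * frob2 (E *m ones n 1).

Definition U_num (V : 'M[R]_(n, r)) : 'M[R]_(m, r) :=
  A1sig *m X *m V + X *m A2sig *m V.
Definition U_den (U : 'M[R]_(m, r)) (V : 'M[R]_(n, r)) : 'M[R]_(m, r) :=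
  (A1sig + lam1 *: P1) *m U *m V^T *m V + U *m V^T *m (A2sig + lam2 *: P2) *m V.
Definition U_update (U : 'M[R]_(m, r)) (V : 'M[R]_(n, r)) : 'M[R]_(m, r) :=
  hadamard U (ediv (U_num V) (U_den U V)).

Definition V_num (U : 'M[R]_(m, r)) : 'M[R]_(n, r) :=
  X^T *m A1sig *m U + A2sig *m X^T *m U.
Definition V_den (U : 'M[R]_(m, r)) (V : 'M[R]_(n, r)) : 'M[R]_(n, r) :=
  V *m U^T *m (A1sig + lam1 *: P1) *m U + (A2sig + lam2 *: P2) *m V *m U^T *m U.
Definition V_update (U : 'M[R]_(m, r)) (V : 'M[R]_(n, r)) : 'M[R]_(n, r) :=
  hadamard V (ediv (V_num U) (V_den U V)).

End Defs.

(* With V fixed, the objective is a quadratic in U,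
     <U, M1 U (V^T V) + U (V^T M2 V)> - 2 <U, U_num V> + const,
   with M1 = A1sig + lam1 P1 and M2 = A2sig + lam2 P2: the sig-terms of the
   objective are exactly what completes A1^T A1 and A2 A2^T to A1sig and A2sig.
   The bounds on sig1, sig2 make M1 and M2, hence all coefficient matrices of
   this quadratic, symmetric and entrywise nonnegative.  For such a quadratic the
   Lee-Seung step U o B / (M1 U V^T V + U V^T M2 V) minimises an auxiliary
   function that majorises the quadratic and touches it at U, so the objective
   cannot increase.  The V-update is the U-update of the transposed problem
   (X^T, A2^T, A1^T, Q2, Q1), which has the same objective. *)

From HB Require Import structures.
From mathcomp Require Import all_boot all_order all_algebra.
From mathcomp Require Import ring lra.
Import Order.TTheory GRing.Theory Num.Theory.
Local Open Scope ring_scope.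
Set Implicit Arguments. Unset Strict Implicit. Unset Printing Implicit Defensive.

Section MultiplicativeUpdate.
Variables (R : realFieldType) (I : finType).

Lemma sum_sym_weighted_prod_le (w : I -> I -> R) (t : I -> R) :
  (forall x y, w x y = w y x) -> (forall x y, 0 <= w x y) ->
  \sum_x \sum_y w x y * (t x * t y) <= \sum_x \sum_y w x y * t x ^+ 2.
Proof.
move=> wC w_ge0.
pose avg x y := (w x y * t x ^+ 2 + w y x * t y ^+ 2) / 2.
have le_avg x y : w x y * (t x * t y) <= avg x y.
  rewrite /avg -(wC x y) ler_pdivlMr ?ltr0n //.
  have := mulr_ge0 (w_ge0 x y) (sqr_ge0 (t x - t y)); nra.
apply: le_trans (_ : \sum_x \sum_y avg x y <= _).
  by apply: ler_sum => x _; apply: ler_sum => y _; apply: le_avg.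
have -> : \sum_x \sum_y avg x y =
    (\sum_x \sum_y w x y * t x ^+ 2 + \sum_x \sum_y w y x * t y ^+ 2) / 2.
  rewrite mulrDl !mulr_suml -big_split /=; apply: eq_bigr => x _.
  by rewrite -mulrDl -big_split /= mulr_suml.
rewrite [X in (_ + X) / 2]exchange_big /=; lra.
Qed.

(* Lee-Seung: the quadratic term at [y = u t] is at most [sum_x u_x d_x t_x^2],
   and [t_x = b_x / d_x] minimises [u_x (d_x t^2 - 2 b_x t)], in particular
   does at least as well as [t = 1], i.e. [u]. *)
Lemma quad_mult_update_le (S : I -> I -> R) (u b d y : I -> R) :
  (forall x z, S x z = S z x) -> (forall x z, 0 <= S x z) ->
  (forall x, 0 <= u x) ->
  (forall x, d x = \sum_z S x z * u z) -> (forall x, 0 < d x) ->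
  (forall x, y x = u x * (b x / d x)) ->
  \sum_x y x * (\sum_z S x z * y z) - 2 * \sum_x y x * b x
  <= \sum_x u x * (\sum_z S x z * u z) - 2 * \sum_x u x * b x.
Proof.
move=> SC S_ge0 u_ge0 dE d_gt0 yE.
pose t x := b x / d x.
have bE x : b x = t x * d x by rewrite /t mulfVK // gt_eqF.
have quad_le : \sum_x y x * (\sum_z S x z * y z) <= \sum_x t x ^+ 2 * (u x * d x).
  have -> : \sum_x y x * (\sum_z S x z * y z) =
      \sum_x \sum_z (S x z * u x * u z) * (t x * t z).
    apply: eq_bigr => x _; rewrite mulr_sumr; apply: eq_bigr => z _.
    by rewrite !yE /t; ring.
  have -> : \sum_x t x ^+ 2 * (u x * d x) =
      \sum_x \sum_z (S x z * u x * u z) * t x ^+ 2.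
    by apply: eq_bigr => x _; rewrite dE !mulr_sumr; apply: eq_bigr => z _; ring.
  apply: sum_sym_weighted_prod_le => x z; last by rewrite !mulr_ge0.
  by rewrite SC; ring.
have aux_le : \sum_x t x ^+ 2 * (u x * d x) - 2 * \sum_x y x * b x <=
              \sum_x u x * d x - 2 * \sum_x u x * b x.
  rewrite !mulr_sumr -!sumrB; apply: ler_sum => x _.
  rewrite yE -/(t x) bE.
  have := mulr_ge0 (mulr_ge0 (u_ge0 x) (ltW (d_gt0 x))) (sqr_ge0 (1 - t x)); nra.
have -> : \sum_x u x * (\sum_z S x z * u z) = \sum_x u x * d x.
  by apply: eq_bigr => x _; rewrite dE.
apply: le_trans aux_le; lra.
Qed.

End MultiplicativeUpdate.

Section FrobeniusInnerProduct.
Variable R : realFieldType.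

Definition mxdot (p q : nat) (M N : 'M[R]_(p, q)) : R := \tr (M^T *m N).

Lemma mxdotE p q (M N : 'M[R]_(p, q)) : mxdot M N = \sum_i \sum_j M i j * N i j.
Proof.
rewrite /mxdot /mxtrace exchange_big /=; apply: eq_bigr => j _.
by rewrite mxE; apply: eq_bigr => i _; rewrite mxE.
Qed.

Lemma mxdot_pair p q (M N : 'M[R]_(p, q)) :
  mxdot M N = \sum_(x : 'I_p * 'I_q) M x.1 x.2 * N x.1 x.2.
Proof. by rewrite mxdotE pair_big. Qed.

Lemma frob2_mxdot p q (M : 'M[R]_(p, q)) : frob2 M = mxdot M M.
Proof. by rewrite mxdotE; apply: eq_bigr => i _; apply: eq_bigr => j _; rewrite expr2. Qed.

Lemma mxdotC p q (M N : 'M[R]_(p, q)) : mxdot M N = mxdot N M.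
Proof. by rewrite /mxdot -mxtrace_tr trmx_mul trmxK. Qed.

Lemma mxdot_tr p q (M N : 'M[R]_(p, q)) : mxdot M^T N^T = mxdot M N.
Proof. by rewrite !mxdotE exchange_big /=; apply: eq_bigr => j _; apply: eq_bigr => i _; rewrite !mxE. Qed.

Lemma mxdotDl p q (M N P : 'M[R]_(p, q)) : mxdot (M + N) P = mxdot M P + mxdot N P.
Proof. by rewrite /mxdot linearD /= mulmxDl mxtraceD. Qed.

Lemma mxdotDr p q (M N P : 'M[R]_(p, q)) : mxdot P (M + N) = mxdot P M + mxdot P N.
Proof. by rewrite /mxdot mulmxDr mxtraceD. Qed.

Lemma mxdotZl p q a (M N : 'M[R]_(p, q)) : mxdot (a *: M) N = a * mxdot M N.
Proof. by rewrite /mxdot linearZ /= -scalemxAl mxtraceZ. Qed.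

Lemma mxdotZr p q a (M N : 'M[R]_(p, q)) : mxdot M (a *: N) = a * mxdot M N.
Proof. by rewrite /mxdot -scalemxAr mxtraceZ. Qed.

Lemma mxdotNl p q (M N : 'M[R]_(p, q)) : mxdot (- M) N = - mxdot M N.
Proof. by rewrite -scaleN1r mxdotZl mulN1r. Qed.

Lemma mxdotNr p q (M N : 'M[R]_(p, q)) : mxdot M (- N) = - mxdot M N.
Proof. by rewrite -scaleN1r mxdotZr mulN1r. Qed.

Lemma mxdot_mulmxl p q s (A : 'M[R]_(s, p)) (M : 'M[R]_(p, q)) N :
  mxdot (A *m M) N = mxdot M (A^T *m N).
Proof. by rewrite /mxdot trmx_mul mulmxA. Qed.

Lemma mxdot_mulmxr p q s (M : 'M[R]_(p, q)) (B : 'M[R]_(q, s)) N :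
  mxdot (M *m B) N = mxdot M (N *m B^T).
Proof. by rewrite /mxdot trmx_mul -mulmxA mxtrace_mulC mulmxA. Qed.

Lemma frob2_tr p q (M : 'M[R]_(p, q)) : frob2 M^T = frob2 M.
Proof. by rewrite !frob2_mxdot mxdot_tr. Qed.

Lemma frob2_mulmxBr s p q (A : 'M[R]_(s, p)) (X W : 'M[R]_(p, q)) :
  frob2 (A *m (X - W)) =
  frob2 (A *m X) - 2 * mxdot (A^T *m A *m X) W + mxdot W (A^T *m A *m W).
Proof.
have cross : mxdot (A *m X) (A *m W) = mxdot (A^T *m A *m X) W.
  by rewrite mxdotC mxdot_mulmxl mxdotC mulmxA.
rewrite frob2_mxdot mulmxBr mxdotDl !mxdotDr !mxdotNl !mxdotNr cross.
rewrite [mxdot (A *m W) (A *m X)]mxdotC cross -frob2_mxdot.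
rewrite [mxdot (A *m W) _]mxdot_mulmxl mulmxA; ring.
Qed.

Lemma frob2_mulmxBl s p q (B : 'M[R]_(q, s)) (X W : 'M[R]_(p, q)) :
  frob2 ((X - W) *m B) =
  frob2 (X *m B) - 2 * mxdot (X *m (B *m B^T)) W + mxdot W (W *m (B *m B^T)).
Proof.
rewrite -frob2_tr trmx_mul linearB /= frob2_mulmxBr trmxK -trmx_mul frob2_tr.
by rewrite -[mxdot (X *m _) W]mxdot_tr -[mxdot W (W *m _)]mxdot_tr !trmx_mul !trmxK.
Qed.

End FrobeniusInnerProduct.

Section NonnegMatrices.
Variable R : realFieldType.

Lemma nonneg_mulmx p q s (A : 'M[R]_(p, q)) (B : 'M[R]_(q, s)) :
  nonneg_mx A -> nonneg_mx B -> nonneg_mx (A *m B).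
Proof. by move=> A_ge0 B_ge0 i j; rewrite mxE; apply: sumr_ge0 => l _; apply: mulr_ge0. Qed.

Lemma nonneg_addmx p q (A B : 'M[R]_(p, q)) :
  nonneg_mx A -> nonneg_mx B -> nonneg_mx (A + B).
Proof. by move=> A_ge0 B_ge0 i j; rewrite mxE; apply: addr_ge0. Qed.

Lemma nonneg_trmx p q (A : 'M[R]_(p, q)) : nonneg_mx A -> nonneg_mx A^T.
Proof. by move=> A_ge0 i j; rewrite mxE. Qed.

Lemma nonneg_mult_update p q (U B D : 'M[R]_(p, q)) :
  nonneg_mx U -> nonneg_mx B -> pos_mx D -> nonneg_mx (hadamard U (ediv B D)).
Proof. by move=> U_ge0 B_ge0 D_gt0 i j; rewrite !mxE mulr_ge0 // divr_ge0 // ltW. Qed.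

End NonnegMatrices.

Section MatrixMultiplicativeUpdate.
Variables (R : realFieldType) (m r : nat) (M : 'M[R]_m) (K L : 'M[R]_r).
Hypotheses (MT : M^T = M) (KT : K^T = K) (LT : L^T = L).
Hypotheses (M_ge0 : nonneg_mx M) (K_ge0 : nonneg_mx K) (L_ge0 : nonneg_mx L).

(* The matrix of [Z |-> M Z K + Z L] on the entries of [Z], indexed by pairs. *)
Let S (x y : 'I_m * 'I_r) := M x.1 y.1 * K y.2 x.2 + (x.1 == y.1)%:R * L y.2 x.2.

Let sum_pair (F : 'I_m * 'I_r -> R) : \sum_x F x = \sum_a \sum_j F (a, j).
Proof. by rewrite pair_big; apply: eq_bigr => -[]. Qed.

Let quad_entry (Z : 'M[R]_(m, r)) a i :
  (M *m Z *m K + Z *m L) a i = \sum_y S (a, i) y * Z y.1 y.2.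
Proof.
rewrite /S; under eq_bigr do rewrite mulrDl.
rewrite big_split /= !mxE !sum_pair /=; congr (_ + _).
  rewrite exchange_big /=; apply: eq_bigr => j _; rewrite !mxE mulr_suml.
  by apply: eq_bigr => b _; ring.
rewrite [RHS](bigD1 a) //= [X in _ + X]big1 ?addr0; last first.
  by move=> b /negbTE ba; apply: big1 => j _; rewrite eq_sym ba mul0r mul0r.
by rewrite eqxx; apply: eq_bigr => j _; rewrite mul1r mulrC.
Qed.

Lemma mxquad_mult_update_le (U B Y : 'M[R]_(m, r)) :
  nonneg_mx U -> pos_mx (M *m U *m K + U *m L) ->
  Y = hadamard U (ediv B (M *m U *m K + U *m L)) ->
  mxdot Y (M *m Y *m K + Y *m L) - 2 * mxdot Y B
  <= mxdot U (M *m U *m K + U *m L) - 2 * mxdot U B.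
Proof.
move=> U_ge0 D_gt0 ->.
have mxdot_quad (Z : 'M[R]_(m, r)) : mxdot Z (M *m Z *m K + Z *m L) =
    \sum_x Z x.1 x.2 * \sum_z S x z * Z z.1 z.2.
  by rewrite mxdot_pair; apply: eq_bigr => -[a i] _; rewrite quad_entry.
rewrite !mxdot_quad !mxdot_pair.
apply: (quad_mult_update_le (d := fun x => (M *m U *m K + U *m L) x.1 x.2)).
- have sym n (N : 'M[R]_n) a b : N^T = N -> N a b = N b a by move=> NT; rewrite -{1}NT mxE.
  by move=> [a i] [b j]; rewrite /S /= (sym _ _ _ _ MT) (sym _ _ _ _ KT) (sym _ _ _ _ LT) eq_sym.
- by move=> [a i] [b j]; rewrite /S addr_ge0 ?mulr_ge0 ?ler0n.
- by move=> x; apply: U_ge0.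
- by move=> [a i]; rewrite quad_entry.
- by move=> x; apply: D_gt0.
- by move=> x; rewrite !mxE.
Qed.

End MatrixMultiplicativeUpdate.

Section CoefficientMatrices.
Variable R : realFieldType.

Lemma P1_sym p s (Q : 'M[R]_(p, s)) : (P1 Q)^T = P1 Q.
Proof. by rewrite /P1 linearB /= trmx1 trmx_mul trmxK. Qed.

Lemma P1_idem p s (Q : 'M[R]_(p, s)) : Q^T *m Q = 1%:M -> P1 Q *m P1 Q = P1 Q.
Proof.
move=> QTQ; rewrite /P1 mulmxBl mul1mx mulmxBr mulmx1 -!mulmxA (mulmxA Q^T) QTQ.
by rewrite mul1mx subrr subr0.
Qed.

Lemma A1sig_sym p k (A : 'M[R]_(k, p)) s : (A1sig A s)^T = A1sig A s.
Proof. by rewrite /A1sig linearD linearZ /= trmx_mul trmxK trmx_const. Qed.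

Lemma A2sig_sym p k (A : 'M[R]_(p, k)) s : (A2sig A s)^T = A2sig A s.
Proof. by rewrite /A2sig linearD linearZ /= trmx_mul trmxK trmx_const. Qed.

Lemma A1sig_trmx p k (A : 'M[R]_(p, k)) s : A1sig A^T s = A2sig A s.
Proof. by rewrite /A1sig /A2sig trmxK. Qed.

Lemma A2sig_trmx p k (A : 'M[R]_(k, p)) s : A2sig A^T s = A1sig A s.
Proof. by rewrite /A1sig /A2sig trmxK. Qed.

Lemma ones_col_mul p : (ones R 1 p)^T *m ones R 1 p = ones R p p.
Proof. by apply/matrixP => i j; rewrite !mxE big_ord1 !mxE mulr1. Qed.

Lemma ones_row_mul p : ones R p 1 *m (ones R p 1)^T = ones R p p.
Proof. by apply/matrixP => i j; rewrite !mxE big_ord1 !mxE mulr1. Qed.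

Lemma negpart_le_addr_ge0 (x s : R) : negpart x <= s -> 0 <= x + s.
Proof.
rewrite /negpart => le_s; have min_le : Num.min x 0 <= x by rewrite ge_min lexx.
lra.
Qed.

Lemma nonneg_shift_ones p (N : 'M[R]_p) s :
  (forall a b, negpart (N a b) <= s) -> nonneg_mx (N + s *: ones R p p).
Proof. by move=> le_s a b; rewrite !mxE mulr1 negpart_le_addr_ge0. Qed.

End CoefficientMatrices.

Section Objective.
Variables (R : realFieldType) (m n k r p1 p2 : nat).
Variables (X : 'M[R]_(m, n)) (A1 : 'M[R]_(k, m)) (A2 : 'M[R]_(n, k)).
Variables (Q1 : 'M[R]_(m, p1)) (Q2 : 'M[R]_(n, p2)).
Variables (lam1 lam2 sig1 sig2 : R).
Hypotheses (Q1TQ1 : Q1^T *m Q1 = 1%:M) (Q2TQ2 : Q2^T *m Q2 = 1%:M).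

Let M1 := A1sig A1 sig1 + lam1 *: P1 Q1.
Let M2 := A2sig A2 sig2 + lam2 *: P2 Q2.
Let c := frob2 (A1 *m X) + frob2 (X *m A2)
  + sig1 * frob2 (ones R 1 m *m X) + sig2 * frob2 (X *m ones R n 1).
Local Notation obj := (objective X A1 A2 Q1 Q2 lam1 lam2 sig1 sig2).

Let M1_sym : M1^T = M1.
Proof. by rewrite /M1 linearD linearZ /= A1sig_sym P1_sym. Qed.

Let M2_sym : M2^T = M2.
Proof. by rewrite /M2 linearD linearZ /= A2sig_sym P1_sym. Qed.

Lemma objective_prodE (U : 'M[R]_(m, r)) (V : 'M[R]_(n, r)) :
  let W := U *m V^T in
  obj U V = mxdot W (M1 *m W) + mxdot W (W *m M2)
    - 2 * mxdot (A1sig A1 sig1 *m X + X *m A2sig A2 sig2) W + c.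
Proof.
move=> W; rewrite /objective -/W /c.
have frobP1 : frob2 (P1 Q1 *m W) = mxdot W (P1 Q1 *m W).
  by rewrite frob2_mxdot mxdot_mulmxl mulmxA P1_sym P1_idem.
have frobP2 : frob2 (W *m P2 Q2) = mxdot W (W *m P2 Q2).
  by rewrite frob2_mxdot mxdot_mulmxr -mulmxA P1_sym P1_idem.
rewrite frobP1 frobP2 !frob2_mulmxBr !frob2_mulmxBl ones_col_mul ones_row_mul.
rewrite /M1 /M2 /A1sig /A2sig; move: (P1 Q1) (P2 Q2) => P P'.
rewrite !mulmxDl !mulmxDr -!scalemxAl -!scalemxAr !mxdotDl !mxdotDr !mxdotZl !mxdotZr.
ring.
Qed.

Lemma objective_in_U (U : 'M[R]_(m, r)) (V : 'M[R]_(n, r)) :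
  obj U V = mxdot U (M1 *m U *m (V^T *m V) + U *m (V^T *m M2 *m V))
    - 2 * mxdot U (U_num X A1 A2 sig1 sig2 V) + c.
Proof.
rewrite objective_prodE [mxdot (_ + _) _]mxdotC !mxdot_mulmxr trmxK /U_num.
by rewrite mxdotDr !mulmxA (mulmxDl (A1sig A1 sig1 *m X)).
Qed.

Hypotheses (X_ge0 : nonneg_mx X).
Hypotheses (A1sig_ge0 : nonneg_mx (A1sig A1 sig1)) (A2sig_ge0 : nonneg_mx (A2sig A2 sig2)).
Hypotheses (M1_ge0 : nonneg_mx M1) (M2_ge0 : nonneg_mx M2).

Lemma U_update_descent (U : 'M[R]_(m, r)) (V : 'M[R]_(n, r)) :
  nonneg_mx U -> nonneg_mx V -> pos_mx (U_den A1 A2 Q1 Q2 lam1 lam2 sig1 sig2 U V) ->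
  let U' := U_update X A1 A2 Q1 Q2 lam1 lam2 sig1 sig2 U V in
  nonneg_mx U' /\ obj U' V <= obj U V.
Proof.
move=> U_ge0 V_ge0 den_gt0 U'.
have num_ge0 : nonneg_mx (U_num X A1 A2 sig1 sig2 V).
  by apply: nonneg_addmx; repeat apply: nonneg_mulmx.
have denE : U_den A1 A2 Q1 Q2 lam1 lam2 sig1 sig2 U V =
    M1 *m U *m (V^T *m V) + U *m (V^T *m M2 *m V).
  by rewrite /U_den !mulmxA.
split; first exact: nonneg_mult_update.
rewrite !objective_in_U lerD2r.
apply: mxquad_mult_update_le; rewrite -?denE //.
- by rewrite trmx_mul trmxK.
- by rewrite !trmx_mul trmxK M2_sym mulmxA.
- by apply: nonneg_mulmx => //; apply: nonneg_trmx.
- by repeat apply: nonneg_mulmx => //; apply: nonneg_trmx.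
Qed.

End Objective.

Section Transposition.
Variables (R : realFieldType) (m n k r p1 p2 : nat).
Variables (X : 'M[R]_(m, n)) (A1 : 'M[R]_(k, m)) (A2 : 'M[R]_(n, k)).
Variables (Q1 : 'M[R]_(m, p1)) (Q2 : 'M[R]_(n, p2)).
Variables (lam1 lam2 sig1 sig2 : R) (U : 'M[R]_(m, r)) (V : 'M[R]_(n, r)).

Lemma objective_trmx :
  objective X A1 A2 Q1 Q2 lam1 lam2 sig1 sig2 U V =
  objective X^T A2^T A1^T Q2 Q1 lam2 lam1 sig2 sig1 V U.
Proof.
have prodT : V *m U^T = (U *m V^T)^T by rewrite trmx_mul trmxK.
have resT : X^T - V *m U^T = (X - U *m V^T)^T by rewrite linearB /= prodT.
have onesT p q : (ones R p q)^T = ones R q p by rewrite trmx_const.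
rewrite /objective resT prodT -[P1 Q2]P1_sym -[P2 Q1]P1_sym -(onesT n 1) -(onesT 1 m).
rewrite -!trmx_mul !frob2_tr; ring.
Qed.

Lemma V_den_trmx :
  V_den A1 A2 Q1 Q2 lam1 lam2 sig1 sig2 U V =
  U_den A2^T A1^T Q2 Q1 lam2 lam1 sig2 sig1 V U.
Proof. by rewrite /V_den /U_den A1sig_trmx A2sig_trmx addrC. Qed.

Lemma V_update_trmx :
  V_update X A1 A2 Q1 Q2 lam1 lam2 sig1 sig2 U V =
  U_update X^T A2^T A1^T Q2 Q1 lam2 lam1 sig2 sig1 V U.
Proof.
rewrite /V_update /U_update V_den_trmx /V_num /U_num A1sig_trmx A2sig_trmx.
by rewrite addrC.
Qed.

End Transposition.

Theorem mainTheorem8 (R : realFieldType) (m n k r p1 p2 : nat)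
  (X : 'M[R]_(m, n)) (A1 : 'M[R]_(k, m)) (A2 : 'M[R]_(n, k))
  (Q1 : 'M[R]_(m, p1)) (Q2 : 'M[R]_(n, p2))
  (lam1 lam2 sig1 sig2 : R) :
  nonneg_mx X ->
  A1 *m X *m A2 \in unitmx ->
  onb_colspace Q1 (X *m A2) ->
  onb_rowspace Q2 (A1 *m X) ->
  0 <= lam1 -> 0 <= lam2 ->
  (forall a b : 'I_m, negpart ((A1^T *m A1) a b) <= sig1) ->
  (forall a b : 'I_m, negpart ((A1^T *m A1 + lam1 *: P1 Q1) a b) <= sig1) ->
  (forall a b : 'I_n, negpart ((A2 *m A2^T) a b) <= sig2) ->
  (forall a b : 'I_n, negpart ((A2 *m A2^T + lam2 *: P2 Q2) a b) <= sig2) ->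
  forall (U : 'M[R]_(m, r)) (V : 'M[R]_(n, r)),
    nonneg_mx U -> nonneg_mx V ->
    (pos_mx (U_den A1 A2 Q1 Q2 lam1 lam2 sig1 sig2 U V) ->
       nonneg_mx (U_update X A1 A2 Q1 Q2 lam1 lam2 sig1 sig2 U V) /\
       objective X A1 A2 Q1 Q2 lam1 lam2 sig1 sig2
         (U_update X A1 A2 Q1 Q2 lam1 lam2 sig1 sig2 U V) V
       <= objective X A1 A2 Q1 Q2 lam1 lam2 sig1 sig2 U V) /\
    (pos_mx (V_den A1 A2 Q1 Q2 lam1 lam2 sig1 sig2 U V) ->
       nonneg_mx (V_update X A1 A2 Q1 Q2 lam1 lam2 sig1 sig2 U V) /\
       objective X A1 A2 Q1 Q2 lam1 lam2 sig1 sig2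
         U (V_update X A1 A2 Q1 Q2 lam1 lam2 sig1 sig2 U V)
       <= objective X A1 A2 Q1 Q2 lam1 lam2 sig1 sig2 U V).
Proof.
move=> X_ge0 _ [Q1TQ1 _] [Q2TQ2 _] _ _ neg1 negP1 neg2 negP2 U V U_ge0 V_ge0.
have A1sig_ge0 : nonneg_mx (A1sig A1 sig1) by apply: nonneg_shift_ones.
have A2sig_ge0 : nonneg_mx (A2sig A2 sig2) by apply: nonneg_shift_ones.
have M1_ge0 : nonneg_mx (A1sig A1 sig1 + lam1 *: P1 Q1).
  by rewrite /A1sig addrAC; apply: nonneg_shift_ones.
have M2_ge0 : nonneg_mx (A2sig A2 sig2 + lam2 *: P2 Q2).
  by rewrite /A2sig addrAC; apply: nonneg_shift_ones.
split; first exact: U_update_descent.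
rewrite V_den_trmx V_update_trmx !(objective_trmx X A1 A2 Q1 Q2) => den_gt0.
apply: U_update_descent; rewrite ?A1sig_trmx ?A2sig_trmx //.
exact: nonneg_trmx.
Qed.
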